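(* Let $(M,D_t)$ be a differential module of rank $\mathfrak r$ over $\mathcal O_t^\pm$, let $a\in{\mathscr D}_t^\pm(k)$, and let $m_1,\dots,m_{\mathfrak r}$ be a basis of the space of horizontal elements of $M$ at $a$. The following are equivalent: (1) $m_1,\dots,m_{\mathfrak r}$ is an optimal basis at $a$; (2) for every $r$, letting $J_r=\{j: \mathcal R_a(m_j)=r\}$, every nontrivial $k$-linear combination $\sum_{j\in J_r}\alpha_jm_j$ has radius of convergence $r$ at $a$; (3) for every nonzero horizontal element $m$ at $a$ with radius of convergence $r$, writing $m=\sum_{i=1}^{\mathfrak r}\beta_im_i$, one has $\mathcal R_a(m_i)\ge r$ for every $i$ with $\beta_i\ne0$, and $\mathcal R_a(m_i)=r$ for at least one such $i$.
   Context: $k$ is an algebraically closed field complete for a non-archimedean absolute value extending the $p$-adic one. ${\mathscr D}_t^\pm$ is the unit disc (open or closed) with ring $\mathcal O_t^\pm$; $\mathcal O_t(a,r^-)$ the ring of power series in $t-a$ converging on $|t-a|<r$. For $f\in k[[t-a]]$, $\mathcal R_a(f)=\sup\{r\in[0,1):f\in\mathcal O_t(a,r^-)\}$, for vectors the minimum over components. A differential module of rank $\mathfrak r$ is a free $\mathcal O_t^\pm$-module $M$ of rank $\mathfrak r$ with $k$-linear $D_t$, $D_t(gm)=\frac{dg}{dt}m+gD_t(m)$. A horizontal element at $a$ is an element of $\ker D_t$ on $M\otimes\mathcal O_t(a,r^-)$ for some $r>0$, identified with its coordinate vector in $k[[t-a]]^{\mathfrak r}$ with respect to a fixed basis of $M$;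 its radius of convergence is $\mathcal R_a$ of this vector (independent of the basis). The horizontal elements at $a$ form a $k$-vector space of dimension $\mathfrak r$. The multiradius at $a$ is $(\mathcal R_1,\dots,\mathcal R_{\mathfrak r})$ with $\mathcal R_i=\sup\{r\in(0,1]:\dim_k\ker(D_t|M\otimes\mathcal O_t(a,r^-))\ge\mathfrak r-i+1\}$; a basis of horizontal elements at $a$ is optimal if the radii of its elements can be rearranged to form the multiradius. *)

From HB Require Import structures.
From mathcomp Require Import all_boot all_order all_algebra.
From mathcomp Require Import fingroup perm.
From mathcomp Require Import boolp classical_sets reals.

Set Implicit Arguments.
Unset Strict Implicit.
Unset Printing Implicit Defensive.

Import Order.TTheory GRing.Theory Num.Theory.
Local Open Scope ring_scope.

Section Defs.
Variables (k : fieldType) (R : realType) (abs : k -> R).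

Definition nonarch_abs : Prop :=
  [/\ forall x, 0 <= abs x,
      forall x, abs x = 0 <-> x = 0,
      forall x y, abs (x * y) = abs x * abs y &
      forall x y, abs (x + y) <= Num.max (abs x) (abs y)].

(** The p-adic absolute value on Q: |q|_p = p^(-v_p(q)), |0|_p = 0. *)
Definition padic_abs (p : nat) (q : rat) : R :=
  if q == 0 then 0
  else (p%:R ^+ logn p `|denq q|%N) / (p%:R ^+ logn p `|numq q|%N).

Definition extends_padic (p : nat) : Prop :=
  forall q : rat, abs (ratr q) = padic_abs p q.

Definition abs_cauchy (s : nat -> k) : Prop :=
  forall eps : R, 0 < eps -> exists N, forall m n, (N <= m)%N -> (N <= n)%N ->
    abs (s m - s n) < eps.

Definition is_klim (s : nat -> k) (L : k) : Prop :=
  forall eps : R, 0 < eps -> exists N, forall n, (N <= n)%N -> abs (s n - L) < eps.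

Definition abs_complete : Prop :=
  forall s, abs_cauchy s -> exists L, is_klim s L.

(** The limit of a sequence (0 if it does not converge). *)
Definition klim (s : nat -> k) : k :=
  match pselect (exists L, is_klim s L) with
  | left h => projT1 (cid h)
  | right _ => 0
  end.

(** Power series are coefficient sequences; c : nat -> k represents
    sum_n c n * (t - a)^n, centered at a point fixed by context. *)
Definition partial_sum (c : nat -> k) (x : k) (N : nat) : k :=
  \sum_(i < N) c i * x ^+ i.

Definition series_converges (c : nat -> k) (x : k) : Prop :=
  exists L, is_klim (partial_sum c x) L.

(** c is in O_t(a, r^-): the series sum c n (t-a)^n converges at every
    point t of k with |t - a| < r. *)
Definition in_Odisc (a : k) (r : R) (c : nat -> k) : Prop :=
  forall x : k, abs (x - a) < r -> series_converges c (x - a).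

(** The ring O_t^+ (closed = true) or O_t^- (closed = false) of the unit
    disc: power series in t converging on |t| <= 1, resp. |t| < 1. *)
Definition in_unit_disc (closed : bool) (x : k) : Prop :=
  if closed then abs x <= 1 else abs x < 1.

Definition in_Ot (closed : bool) (c : nat -> k) : Prop :=
  forall x : k, in_unit_disc closed x -> series_converges c x.

Definition taylor_at (a : k) (c : nat -> k) : nat -> k :=
  fun m => klim (fun N => \sum_(n < N) c n * ('C(n, m))%:R * a ^+ (n - m)).

Definition fderiv (c : nat -> k) : nat -> k := fun n => c n.+1 *+ n.+1.
Definition fmul (c d : nat -> k) : nat -> k :=
  fun n => \sum_(i < n.+1) c i * d (n - i)%N.

Definition radius (a : k) (c : nat -> k) : R :=
  sup [set r : R | 0 <= r < 1 /\ in_Odisc a r c].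

Variable n : nat.

(** Coordinate vectors (w.r.t. the fixed basis of M) of elements of
    M (x) k[[t - a]]: component i, coefficient of (t-a)^l. *)
Definition vec := 'I_n -> nat -> k.

Definition radius_vec (a : k) (y : vec) : R :=
  \big[Num.min/1]_(i < n) radius a (y i).

(** A differential module (M, D_t) of rank n over O_t^pm, with a fixed
    basis e_1..e_n of M, is given by the matrix G with
    D_t(e_j) = sum_i G i j e_i, G i j in O_t^pm. *)
Definition diffmod (closed : bool) (G : 'I_n -> 'I_n -> nat -> k) : Prop :=
  forall i j, in_Ot closed (G i j).

Definition Dt_at (a : k) (G : 'I_n -> 'I_n -> nat -> k) (y : vec) : vec :=
  fun i l => fderiv (y i) l + \sum_(j < n) fmul (taylor_at a (G i j)) (y j) l.

Definition in_ker (a : k) (G : 'I_n -> 'I_n -> nat -> k) (r : R) (y : vec) : Prop :=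
  (forall i, in_Odisc a r (y i)) /\ Dt_at a G y = (fun _ _ => 0).

Definition horizontal (a : k) (G : 'I_n -> 'I_n -> nat -> k) (y : vec) : Prop :=
  exists r : R, 0 < r /\ in_ker a G r y.

Definition lincomb (P : pred 'I_n) (beta : 'I_n -> k) (m : 'I_n -> vec) : vec :=
  fun i l => \sum_(j < n | P j) beta j * m j i l.

Definition lin_indep (d : nat) (v : 'I_d -> vec) : Prop :=
  forall beta : 'I_d -> k,
    (fun i l => \sum_(j < d) beta j * v j i l) = (fun _ _ => 0) ->
    forall j, beta j = 0.

Definition dim_ker_ge (a : k) (G : 'I_n -> 'I_n -> nat -> k) (r : R) (d : nat) : Prop :=
  exists v : 'I_d -> vec, (forall l, in_ker a G r (v l)) /\ lin_indep v.

(** Multiradius: for the 0-based index i (i.e. R_{i+1} of the paper),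
    sup { r in (0,1] : dim ker >= n - (i+1) + 1 }. *)
Definition multiradius (a : k) (G : 'I_n -> 'I_n -> nat -> k) (i : 'I_n) : R :=
  sup [set r : R | 0 < r <= 1 /\ dim_ker_ge a G r (n - i)%N].

Definition horizontal_basis (a : k) (G : 'I_n -> 'I_n -> nat -> k)
    (m : 'I_n -> vec) : Prop :=
  [/\ forall j, horizontal a G (m j),
      lin_indep m &
      forall y, horizontal a G y -> exists beta, y = lincomb predT beta m].

Definition optimal_basis (a : k) (G : 'I_n -> 'I_n -> nat -> k)
    (m : 'I_n -> vec) : Prop :=
  exists s : {perm 'I_n}, forall i, radius_vec a (m (s i)) = multiradius a G i.

End Defs.

(* Each O_t(a, r^-) is a k-module, so the radius of a combination of the m_j is
   at least the least radius over its support.  The pivot of the proof is the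
   bound: for every r, the dimension of the space of horizontal elements
   converging on |t - a| < r is at most the number of m_j of radius >= r.
   The multiradius of an optimal basis gives this bound at once; conversely,
   sorting the radii of the m_j, the bound forces them to be the multiradius.
   If a horizontal y had a radius larger than the least radius R_a(m_i0) over
   its support, exchanging m_i0 for y among the m_j of radius >= R_a(y) would
   give one independent horizontal element too many, so the bound implies (3);
   conversely under (3) every horizontal element converging on |t - a| < r lies
   in the span of the m_j of radius >= r.  Finally (2) and (3) are equivalent:
   splitting a combination according to whether R_a(m_j) is the least radius
   r0 over its support, the part of radius > r0 cannot cancel the part of
   radius exactly r0.  Only the absolute value axioms and the fact that m is
   a basis of the horizontal elements at a are used. *)

From HB Require Import structures.
From mathcomp Require Import all_boot all_order all_algebra.
From mathcomp Require Import fingroup perm.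
From mathcomp Require Import boolp classical_sets reals.
From mathcomp Require Import ring lra zify.

Set Implicit Arguments.
Unset Strict Implicit.
Unset Printing Implicit Defensive.

Import Order.TTheory GRing.Theory Num.Theory.
Local Open Scope ring_scope.

Section Radius.
Variables (k : fieldType) (R : realType) (abs : k -> R).
Hypothesis habs : nonarch_abs abs.

Local Notation radius_set a c := [set r : R | 0 <= r < 1 /\ in_Odisc abs a r c]%classic.

Lemma abs0 : abs 0 = 0.
Proof. by case: habs => _ h _ _; apply/h. Qed.

Lemma is_klimD s t L M :
  is_klim abs s L -> is_klim abs t M -> is_klim abs (fun N => s N + t N) (L + M).
Proof.
move=> hs ht e e0; have [N1 H1] := hs e e0; have [N2 H2] := ht e e0.
exists (maxn N1 N2) => q hq.
have -> : s q + t q - (L + M) = (s q - L) + (t q - M) by ring.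
case: habs => _ _ _ hmax; apply: le_lt_trans (hmax _ _) _.
by rewrite gt_max H1 ?H2 //; apply: leq_trans hq; rewrite ?leq_maxl ?leq_maxr.
Qed.

Lemma is_klimZ u s L : is_klim abs s L -> is_klim abs (fun N => u * s N) (u * L).
Proof.
move=> hs e e0; have [->|u0] := eqVneq u 0.
  by exists 0%N => q _; rewrite !mul0r subrr abs0.
have [abs_ge0 abs_eq0 absM _] := habs.
have au : 0 < abs u by rewrite lt_def abs_ge0 andbT; apply: contra_neq u0 => /abs_eq0.
have [N HN] := hs (e / abs u) (divr_gt0 e0 au).
by exists N => q hq; rewrite -mulrBr absM -ltr_pdivlMl // mulrC HN.
Qed.

Lemma partial_sumD (c d : nat -> k) x :
  partial_sum (fun l => c l + d l) x = (fun N => partial_sum c x N + partial_sum d x N).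
Proof.
by apply: funext => N; rewrite /partial_sum -big_split; apply: eq_bigr => i _; rewrite mulrDl.
Qed.

Lemma partial_sumZ u (c : nat -> k) x :
  partial_sum (fun l => u * c l) x = (fun N => u * partial_sum c x N).
Proof.
by apply: funext => N; rewrite /partial_sum mulr_sumr; apply: eq_bigr => i _; rewrite mulrA.
Qed.

Lemma in_Odisc0 a r : in_Odisc abs a r (fun _ => 0).
Proof.
move=> x _; exists 0 => e e0; exists 0%N => q _.
by rewrite /partial_sum big1 ?subrr ?abs0 // => i _; rewrite mul0r.
Qed.

Lemma in_OdiscD a r c d :
  in_Odisc abs a r c -> in_Odisc abs a r d -> in_Odisc abs a r (fun l => c l + d l).
Proof.
move=> hc hd x hx; have [L HL] := hc x hx; have [M HM] := hd x hx.
by exists (L + M); rewrite partial_sumD; exact: is_klimD.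
Qed.

Lemma in_OdiscZ a r u c : in_Odisc abs a r c -> in_Odisc abs a r (fun l => u * c l).
Proof.
move=> hc x hx; have [L HL] := hc x hx.
by exists (u * L); rewrite partial_sumZ; exact: is_klimZ.
Qed.

Lemma in_Odisc_sum a r (I : Type) (s : seq I) (P : pred I) (F : I -> nat -> k) :
  (forall j, P j -> in_Odisc abs a r (F j)) ->
  in_Odisc abs a r (fun l => \sum_(j <- s | P j) F j l).
Proof.
move=> hF; elim: s => [|j s IH].
  by under eq_fun do rewrite big_nil; exact: in_Odisc0.
under eq_fun do rewrite big_cons.
by case Pj: (P j) => //; exact: in_OdiscD (hF j Pj) IH.
Qed.

Lemma in_Odisc_le a r r' c : r' <= r -> in_Odisc abs a r c -> in_Odisc abs a r' c.
Proof. by move=> hr hc x hx; apply: hc; exact: lt_le_trans hx hr. Qed.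

Lemma radius_set0 a c : radius_set a c 0.
Proof.
split; first by rewrite lexx ltr01.
by move=> x; case: habs => abs_ge0 _ _ _; rewrite ltNge abs_ge0.
Qed.

Lemma has_sup_radius_set a c : has_sup (radius_set a c).
Proof.
split; first by exists 0; exact: radius_set0.
by exists 1 => r [/andP[_ /ltW]].
Qed.

Lemma radius_ge0 a c : 0 <= radius abs a c.
Proof. exact: (sup_upper_bound (has_sup_radius_set a c) (radius_set0 a c)). Qed.

Lemma in_Odisc_radius a c r : r <= radius abs a c -> in_Odisc abs a r c.
Proof.
move=> hr x hx.
have hp : 0 < radius abs a c - abs (x - a) by rewrite subr_gt0; exact: lt_le_trans hx hr.
have [e [_ He] he] := sup_adherent hp (has_sup_radius_set a c).
by apply: He; move: he; rewrite /radius; lra.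
Qed.

Lemma radius_ge a c r : r <= 1 -> in_Odisc abs a r c -> r <= radius abs a c.
Proof.
move=> r1 hc; rewrite leNgt; apply/negP => hlt.
have h0 := radius_ge0 a c; set s := radius abs a c in hlt h0.
have hmid : radius_set a c ((s + r) / 2).
  by split; [apply/andP; split; lra | apply: in_Odisc_le hc; lra].
by have := sup_upper_bound (has_sup_radius_set a c) hmid; rewrite -/(radius abs a c) -/s; lra.
Qed.

End Radius.

Section LinearAlgebra.
Variables (k : fieldType) (n : nat).
Implicit Types (m : 'I_n -> vec k n) (y : vec k n) (beta : 'I_n -> k).

Lemma lincomb_mkcond (P : pred 'I_n) beta m :
  lincomb P beta m = lincomb predT (fun j => if P j then beta j else 0) m.
Proof.
apply: funext => i; apply: funext => l; rewrite /lincomb big_mkcond.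
by apply: eq_bigr => j _; case: (P j); rewrite ?mul0r.
Qed.

Lemma lincomb_suml d (u : 'I_d -> k) (B : 'I_d -> 'I_n -> k) m :
  (fun i x => \sum_(l < d) u l * lincomb predT (B l) m i x) =
  lincomb predT (fun j => \sum_(l < d) u l * B l j) m.
Proof.
apply: funext => i; apply: funext => x; rewrite /lincomb.
under eq_bigr => l _ do rewrite mulr_sumr.
rewrite exchange_big /=; apply: eq_bigr => j _; rewrite mulr_suml.
by apply: eq_bigr => l _; rewrite mulrA.
Qed.

Lemma lincomb_coef_neq0 y beta m :
  y <> (fun _ _ => 0) -> y = lincomb predT beta m -> exists j, beta j != 0.
Proof.
move=> ynz hy; apply: contra_notP ynz => hb; rewrite hy.
apply: funext => i; apply: funext => l; rewrite /lincomb big1 // => j _.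
have /eqP -> : beta j == 0 by apply: contra_notT hb; exists j.
by rewrite mul0r.
Qed.

Lemma lin_indep_comp d d' (v : 'I_d -> vec k n) (f : 'I_d' -> 'I_d) :
  injective f -> lin_indep v -> lin_indep (fun l => v (f l)).
Proof.
move=> finj hv g hg l0.
pose b j := \sum_(l < d') (if j == f l then g l else 0).
have hb : (fun i x => \sum_(j < d) b j * v j i x) = (fun _ _ => 0).
  apply: funext => i; apply: funext => x.
  rewrite -[RHS](congr1 (fun F => F i x) hg) /=.
  have -> : \sum_(l < d') g l * v (f l) i x =
            \sum_(l < d') \sum_(j < d) (if j == f l then g l * v j i x else 0).
    by apply: eq_bigr => l _; rewrite -big_mkcond big_pred1_eq.
  rewrite exchange_big /=; apply: eq_bigr => j _; rewrite /b mulr_suml.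
  by apply: eq_bigr => l _; case: eqP; rewrite ?mul0r.
have := hv b hb (f l0); rewrite /b.
under eq_bigr => l _ do rewrite (inj_eq finj) eq_sym.
by rewrite -big_mkcond big_pred1_eq.
Qed.

Lemma lin_indep_exchange y beta m i0 :
  lin_indep m -> y = lincomb predT beta m -> beta i0 != 0 ->
  lin_indep (fun j => if j == i0 then y else m j).
Proof.
move=> hli hy bi0 c hc.
pose g j := (if j == i0 then 0 else c j) + c i0 * beta j.
have hg : (fun i x => \sum_(j < n) g j * m j i x) = (fun _ _ => 0).
  apply: funext => i; apply: funext => x.
  rewrite -[RHS](congr1 (fun F => F i x) hc) /=.
  under eq_bigr => j _ do rewrite mulrDl -mulrA.
  rewrite big_split /= -mulr_sumr [in RHS](bigD1 i0) //= eqxx hy addrC.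
  congr (_ + _); rewrite (bigD1 i0) //= eqxx mul0r add0r.
  by apply: eq_bigr => j /negbTE ->.
have ci0 : c i0 = 0.
  move: (hli g hg i0); rewrite /g eqxx add0r => /eqP.
  by rewrite mulf_eq0 (negbTE bi0) orbF => /eqP.
move=> j; have := hli g hg j; rewrite /g ci0 mul0r addr0.
by case: eqP => [->|].
Qed.

End LinearAlgebra.

Section HorizontalElements.
Variables (k : fieldType) (R : realType) (abs : k -> R) (n : nat) (a : k).
Variable G : 'I_n -> 'I_n -> nat -> k.
Hypothesis habs : nonarch_abs abs.
Implicit Types (m : 'I_n -> vec k n) (y z : vec k n) (beta : 'I_n -> k).

Lemma radius_vec_le1 y : radius_vec abs a y <= 1.
Proof. by apply: bigmin_le_id. Qed.

Lemma radius_vec_geP y r :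
  r <= 1 -> reflect (forall i, in_Odisc abs a r (y i)) (r <= radius_vec abs a y).
Proof.
move=> r1; apply: (iffP idP) => [hr i|hy].
  by apply: (in_Odisc_radius habs); apply: le_trans hr _; exact: bigmin_le.
by apply: le_bigmin => // i _; exact: (radius_ge habs).
Qed.

Lemma radius_vecB y z :
  Num.min (radius_vec abs a y) (radius_vec abs a z) <=
  radius_vec abs a (fun i l => y i l - z i l).
Proof.
set r := Num.min _ _; have r1 : r <= 1 by rewrite ge_min radius_vec_le1.
apply/radius_vec_geP => // i; apply: (in_OdiscD habs).
  by apply/radius_vec_geP; rewrite // ge_min lexx.
under eq_fun do rewrite -mulN1r; apply: (in_OdiscZ habs).
by apply/radius_vec_geP; rewrite // ge_min lexx orbT.
Qed.

Lemma radius_vec_lincomb (P : pred 'I_n) beta m r :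
  r <= 1 -> (forall j, P j -> beta j != 0 -> r <= radius_vec abs a (m j)) ->
  r <= radius_vec abs a (lincomb P beta m).
Proof.
move=> r1 hP; apply/radius_vec_geP => // i.
have -> : lincomb P beta m i =
          (fun l => \sum_(j <- index_enum 'I_n | P j && (beta j != 0)) beta j * m j i l).
  apply: funext => l; rewrite /lincomb big_mkcondr /=; apply: eq_bigr => j _.
  by case: eqP => [->|//]; rewrite mul0r.
apply: (in_Odisc_sum habs) => j /andP[Pj bj]; apply: (in_OdiscZ habs).
exact/radius_vec_geP/hP.
Qed.

Lemma radius_vec_lincomb_gt (P : pred 'I_n) beta m r :
  r < 1 -> (forall j, P j -> beta j != 0 -> r < radius_vec abs a (m j)) ->
  r < radius_vec abs a (lincomb P beta m).
Proof.
move=> r1 hP.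
pose r' := \big[Num.min/1]_(j | P j && (beta j != 0)) radius_vec abs a (m j).
apply: (@lt_le_trans _ _ r'); first by apply: lt_bigmin => // j /andP[]; exact: hP.
apply: radius_vec_lincomb; first exact: bigmin_le_id.
by move=> j Pj bj; apply: bigmin_le_cond; rewrite Pj bj.
Qed.

Lemma fmul_sumr (c : nat -> k) (P : pred 'I_n) beta (F : 'I_n -> nat -> k) l :
  fmul c (fun x => \sum_(q < n | P q) beta q * F q x) l =
  \sum_(q < n | P q) beta q * fmul c (F q) l.
Proof.
rewrite /fmul; under eq_bigr => t _ do rewrite mulr_sumr.
rewrite exchange_big /=; apply: eq_bigr => q _.
by rewrite mulr_sumr; apply: eq_bigr => t _; ring.
Qed.

Lemma Dt_at_lincomb (P : pred 'I_n) beta m i l :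
  Dt_at abs a G (lincomb P beta m) i l = \sum_(q < n | P q) beta q * Dt_at abs a G (m q) i l.
Proof.
rewrite /Dt_at /fderiv /lincomb.
under [in RHS]eq_bigr => q _ do rewrite mulrDr.
rewrite big_split /=; congr (_ + _).
  by rewrite -sumrMnl; apply: eq_bigr => q _; rewrite mulrnAr.
under eq_bigr => j _ do rewrite fmul_sumr.
by rewrite exchange_big /=; apply: eq_bigr => q _; rewrite mulr_sumr.
Qed.

Lemma radius_vec_gt0 y : horizontal abs a G y -> 0 < radius_vec abs a y.
Proof.
move=> [r [r0 [hy _]]]; have r1 : Num.min r 1 <= 1 by rewrite ge_min lexx orbT.
apply: lt_le_trans (_ : 0 < Num.min r 1) _; first by rewrite lt_min r0 ltr01.
by apply/radius_vec_geP => // i; apply: in_Odisc_le (hy i); rewrite ge_min lexx.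
Qed.

Lemma horizontal_in_ker y r :
  horizontal abs a G y -> r <= 1 -> r <= radius_vec abs a y -> in_ker abs a G r y.
Proof. by move=> [_ [_ [_ hD]]] r1 /radius_vec_geP hr; split => //; exact: hr. Qed.

Lemma horizontal_lincomb (P : pred 'I_n) beta m :
  (forall j, horizontal abs a G (m j)) -> horizontal abs a G (lincomb P beta m).
Proof.
move=> hm; pose r := \big[Num.min/1]_(j < n) radius_vec abs a (m j).
have r1 : r <= 1 by exact: bigmin_le_id.
have r0 : 0 < r by apply: lt_bigmin => // j _; exact: radius_vec_gt0.
exists r; split => //; split.
  by apply/radius_vec_geP => //; apply: radius_vec_lincomb => // j _ _; exact: bigmin_le.
apply: funext => i; apply: funext => l; rewrite Dt_at_lincomb big1 // => q _.
by have [_ [_ [_ ->]]] := hm q; rewrite mulr0.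
Qed.

Lemma dim_ker_ge_le r d d' :
  dim_ker_ge abs a G r d -> (d' <= d)%N -> dim_ker_ge abs a G r d'.
Proof.
move=> [v [hv hi]] hd; exists (fun l => v (widen_ord hd l)); split => //.
by apply: lin_indep_comp hi => x y /(congr1 val) /= /val_inj.
Qed.

Lemma dim_ker_ge_card (w : 'I_n -> vec k n) (J : {set 'I_n}) r :
  lin_indep w -> (forall j, j \in J -> in_ker abs a G r (w j)) ->
  dim_ker_ge abs a G r #|J|.
Proof.
move=> hw hJ; exists (fun l => w (enum_val l)); split.
  by move=> l; apply: hJ; exact: enum_valP.
by apply: lin_indep_comp hw; exact: enum_val_inj.
Qed.

Lemma multiradius_ge (i : 'I_n) r :
  0 < r <= 1 -> dim_ker_ge abs a G r (n - i) -> r <= multiradius abs a G i.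
Proof.
move=> hr hd.
have hs : has_sup [set r : R | 0 < r <= 1 /\ dim_ker_ge abs a G r (n - i)]%classic.
  by split; [exists r | exists 1 => x [/andP[_ h] _]].
exact: (sup_upper_bound hs (conj hr hd)).
Qed.

Lemma multiradius_eq (i : 'I_n) t :
  0 < t <= 1 -> dim_ker_ge abs a G t (n - i) ->
  (forall r, 0 < r <= 1 -> dim_ker_ge abs a G r (n - i) -> r <= t) ->
  multiradius abs a G i = t.
Proof.
move=> ht hd hub; apply/eqP; rewrite eq_le multiradius_ge // andbT.
by apply: ge_sup; [exists t | move=> r []; exact: hub].
Qed.

End HorizontalElements.

Lemma sorting_perm disp (T : orderType disp) n (f : 'I_n -> T) :
  exists p : {perm 'I_n}, {homo f \o p : i j / (i <= j)%N >-> (i <= j)%O}.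
Proof.
pose t := [tuple f j | j < n].
have [p hp] : exists p : {perm 'I_n}, sort <=%O t = [tuple tnth t (p i) | i < n].
  by apply/tuple_permP; rewrite perm_sort.
have fE (l : 'I_n) x0 : f (p l) = nth x0 (sort <=%O t) l.
  by rewrite hp -tnth_nth !tnth_mktuple.
exists p => i j hij /=; rewrite (fE i (f (p i))) (fE j (f (p i))).
by apply: (le_sorted_leq_nth _ (sort_le_sorted t)) hij; rewrite inE size_sort size_tuple.
Qed.

Lemma card_ord_geq n c : (c <= n)%N -> #|[set i : 'I_n | (c <= i)%N]| = (n - c)%N.
Proof.
move=> hc; rewrite -sum1_card.
rewrite (eq_bigl (fun i : 'I_n => (c <= i)%N)) => [|i]; last by rewrite inE.
rewrite -(big_geq_mkord c n predT (fun _ => 1%N)) /= -big_filter filter_predT.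
by rewrite sum_nat_const_nat muln1.
Qed.

Section HorizontalBasis.
Variables (k : fieldType) (R : realType) (abs : k -> R) (n : nat) (a : k).
Variables (G : 'I_n -> 'I_n -> nat -> k) (m : 'I_n -> vec k n).
Hypotheses (habs : nonarch_abs abs) (hm : horizontal_basis abs a G m).

Local Notation rho j := (radius_vec abs a (m j)).

Definition pure_radius_combinations : Prop :=
  forall (r : R) (alpha : 'I_n -> k), (exists j, rho j = r /\ alpha j <> 0) ->
    radius_vec abs a (lincomb (fun j => rho j == r) alpha m) = r.

Definition radius_support_min : Prop :=
  forall y : vec k n, horizontal abs a G y -> y <> (fun _ _ => 0) ->
    forall beta : 'I_n -> k, y = lincomb predT beta m ->
      (forall i, beta i <> 0 -> radius_vec abs a y <= rho i) /\
      (exists i, beta i <> 0 /\ rho i = radius_vec abs a y).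

Definition ker_dim_bounded : Prop :=
  forall r d, 0 < r <= 1 -> dim_ker_ge abs a G r d -> (d <= #|[set j | (r <= rho j)%R]|)%N.

(* [rho i0 <= R_a(y)] always holds, so only its strictness has to be excluded. *)
Lemma radius_support_minP :
  (forall y beta i0, horizontal abs a G y -> y = lincomb predT beta m -> beta i0 != 0 ->
     (forall j, beta j != 0 -> rho i0 <= rho j) -> ~ rho i0 < radius_vec abs a y) ->
  radius_support_min.
Proof.
move=> hle y hy ynz beta hyb.
have [j0 bj0] := lincomb_coef_neq0 ynz hyb.
have [i0 bi0 hmin] := @arg_minP _ _ _ j0 (fun j => beta j != 0) (fun j => rho j) bj0.
have ge : rho i0 <= radius_vec abs a y.
  by rewrite hyb; apply: radius_vec_lincomb => // [|j _ /hmin]; first exact: radius_vec_le1.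
have eq : radius_vec abs a y = rho i0.
  by apply/eqP; rewrite eq_le ge andbT leNgt; apply/negP; exact: hle hy hyb bi0 hmin.
split => [i /eqP bi|]; first by rewrite eq hmin.
by exists i0; split; [exact/eqP | rewrite eq].
Qed.

Lemma radius_support_min_pure : radius_support_min -> pure_radius_combinations.
Proof.
have [hh hli _] := hm; move=> hmin r alpha [j [hj aj]].
set y := lincomb _ alpha m.
have yE := lincomb_mkcond (fun j => rho j == r) alpha m.
have ynz : y <> (fun _ _ => 0).
  by move=> y0; apply: aj; have := hli _ (etrans (esym yE) y0) j; rewrite hj eqxx.
have [_ [i [+ <-]]] := hmin y (horizontal_lincomb habs _ _ hh) ynz _ yE.
by case: eqP.
Qed.

Lemma pure_radius_support_min : pure_radius_combinations -> radius_support_min.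
Proof.
move=> hpure; apply: radius_support_minP => y beta i0 hy hyb bi0 hmin hlt.
set r0 := rho i0 in hmin hlt.
have r0_lt1 : r0 < 1 by apply: lt_le_trans hlt _; exact: radius_vec_le1.
set A := lincomb (fun j => rho j == r0) beta m.
set B := lincomb (fun j => rho j != r0) beta m.
have hA : radius_vec abs a A = r0 by apply: hpure; exists i0; split => //; exact/eqP.
have hB : r0 < radius_vec abs a B.
  by apply: radius_vec_lincomb_gt => // j hj bj; rewrite lt_neqAle eq_sym hj hmin.
have AE : A = (fun i l => y i l - B i l).
  apply: funext => i; apply: funext => l.
  by rewrite hyb /A /B /lincomb [in RHS](bigID (fun j => rho j == r0)) /= addrK.
by have := radius_vecB a habs y B; rewrite -AE hA leNgt lt_min hlt hB.
Qed.

Lemma ker_dim_bounded_radius_support_min : ker_dim_bounded -> radius_support_min.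
Proof.
have [hh hli _] := hm; move=> hbound.
apply: radius_support_minP => y beta i0 hy hyb bi0 _ hlt.
set r := radius_vec abs a y in hlt.
have r1 : r <= 1 by exact: radius_vec_le1.
have r_range : 0 < r <= 1 by rewrite (radius_vec_gt0 habs hy) r1.
set J := [set j | (r <= rho j)%R].
have i0J : i0 \notin J by rewrite inE -ltNge.
have hdim : dim_ker_ge abs a G r #|i0 |: J|.
  apply: dim_ker_ge_card (lin_indep_exchange hli hyb bi0) _ => j.
  case: eqP => [_|_ /setU1P [//|]]; first by move=> _; apply: (horizontal_in_ker habs hy).
  by rewrite inE; apply: (horizontal_in_ker habs (hh j)).
by have := hbound _ _ r_range hdim; rewrite cardsU1 i0J add1n ltnn.
Qed.

Lemma dim_ker_ge_le_card (J : {set 'I_n}) r d : 0 < r ->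
  (forall y beta j, in_ker abs a G r y -> y = lincomb predT beta m -> beta j != 0 -> j \in J) ->
  dim_ker_ge abs a G r d -> (d <= #|J|)%N.
Proof.
have [_ _ hspan] := hm; move=> r0 hJ [v [hv hli]].
have hor l : horizontal abs a G (v l) by exists r.
have [B hB] := choice (fun l => hspan _ (hor l)).
(* The coordinates of the v l on the m j, j \in J, form a row-free matrix. *)
pose M : 'M[k]_(d, #|J|) := \matrix_(l, t) B l (enum_val t).
suff /eqP <- : row_free M by exact: rank_leq_col.
apply: inj_row_free => u hu.
have coef0 j : \sum_(l < d) u 0 l * B l j = 0.
  have [hj|hj] := boolP (j \in J).
    have := congr1 (fun A : 'rV[k]_#|J| => A 0 (enum_rank_in hj j)) hu; rewrite !mxE => hu_j.
    by apply: etrans hu_j; apply: eq_bigr => l _; rewrite mxE enum_rankK_in.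
  apply: big1 => l _; have [->|/(hJ _ _ _ (hv l) (hB l))] := eqVneq (B l j) 0.
    by rewrite mulr0.
  by rewrite (negbTE hj).
have hsum : (fun i x => \sum_(l < d) u 0 l * v l i x) = (fun _ _ => 0).
  transitivity (fun i x => \sum_(l < d) u 0 l * lincomb predT (B l) m i x).
    by apply: funext => i; apply: funext => x; apply: eq_bigr => l _; rewrite hB.
  rewrite lincomb_suml; apply: funext => i; apply: funext => x.
  by rewrite /lincomb big1 // => j _; rewrite coef0 mul0r.
by apply/matrixP => i l; rewrite mxE (ord1 i); exact: hli _ hsum l.
Qed.

Lemma radius_support_min_ker_dim_bounded : radius_support_min -> ker_dim_bounded.
Proof.
have [_ hli _] := hm; move=> hmin r d /andP[r0 r1].
apply: dim_ker_ge_le_card => // y beta j hy hyb bj; rewrite inE.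
have hor : horizontal abs a G y by exists r.
have ynz : y <> (fun _ _ => 0).
  by move=> y0; move/eqP: bj; apply; exact: hli beta (etrans (esym hyb) y0) j.
have [hle _] := hmin y hor ynz beta hyb.
apply: le_trans (hle j (elimN eqP bj)); apply/radius_vec_geP => //; by case: hy.
Qed.

Lemma optimal_basis_ker_dim_bounded : optimal_basis abs a G m -> ker_dim_bounded.
Proof.
move=> [s hs] r d hr hdim.
have dn : (d <= n)%N.
  rewrite -[n]card_ord -cardsT; apply: dim_ker_ge_le_card hdim; first by case/andP: hr.
  by move=> *; rewrite inE.
set J := [set j | _].
have sub : [set i : 'I_n | (n - d <= i)%N] \subset s @^-1: J.
  apply/fintype.subsetP => i; rewrite !inE => hi; rewrite hs.
  by apply: multiradius_ge => //; apply: dim_ker_ge_le hdim _; lia.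
have := subset_leq_card sub; rewrite card_preimset; last exact: perm_inj.
by rewrite card_ord_geq ?leq_subr // subKn.
Qed.

Lemma ker_dim_bounded_optimal_basis : ker_dim_bounded -> optimal_basis abs a G m.
Proof.
have [hh hli _] := hm; move=> hbound.
have [p hp] := sorting_perm (fun j => rho j).
exists p => i; symmetry.
have hi : 0 < rho (p i) <= 1 by rewrite (radius_vec_gt0 habs (hh _)) radius_vec_le1.
apply: multiradius_eq => // [|r hr hdim].
  pose J := [set j | (rho (p i) <= rho j)%R].
  apply: (@dim_ker_ge_le _ _ _ _ _ _ _ #|J|).
    apply: dim_ker_ge_card hli _ => j; rewrite inE => hj.
    by apply: (horizontal_in_ker habs (hh j) _ hj); case/andP: hi.
  have sub : [set l : 'I_n | (i <= l)%N] \subset p @^-1: J.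
    by apply/fintype.subsetP => l; rewrite !inE; exact: hp.
  have := subset_leq_card sub; rewrite card_preimset; last exact: perm_inj.
  by rewrite card_ord_geq // ltnW.
rewrite leNgt; apply/negP => hlt.
have := hbound _ _ hr hdim; set J := [set j | _].
have sub : p @^-1: J \subset [set l : 'I_n | (i < l)%N].
  apply/fintype.subsetP => l; rewrite !inE ltnNge; apply: contraL => /hp /= hli'.
  by rewrite -ltNge; exact: le_lt_trans hli' hlt.
have := subset_leq_card sub; rewrite card_preimset; last exact: perm_inj.
by rewrite card_ord_geq //; move: #|J| (ltn_ord i) => c; lia.
Qed.

End HorizontalBasis.

Theorem lemma3p7 (k : closedFieldType) (R : realType) (abs : k -> R) (p : nat)
  (habs : nonarch_abs abs) (hp : prime p) (hpadic : extends_padic abs p)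
  (hcomplete : abs_complete abs)
  (closed : bool) (n : nat) (G : 'I_n -> 'I_n -> nat -> k)
  (hG : diffmod abs closed G)
  (a : k) (ha : in_unit_disc abs closed a)
  (m : 'I_n -> vec k n) (hm : horizontal_basis abs a G m) :
  (optimal_basis abs a G m <->
     (forall (r : R) (alpha : 'I_n -> k),
        (exists j, radius_vec abs a (m j) = r /\ alpha j <> 0) ->
        radius_vec abs a (lincomb (fun j => radius_vec abs a (m j) == r) alpha m) = r))
  /\
  (optimal_basis abs a G m <->
     (forall y : vec k n, horizontal abs a G y -> y <> (fun _ _ => 0) ->
        forall beta : 'I_n -> k, y = lincomb predT beta m ->
          (forall i, beta i <> 0 -> radius_vec abs a y <= radius_vec abs a (m i)) /\
          (exists i, beta i <> 0 /\ radius_vec abs a (m i) = radius_vec abs a y))).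
Proof.
have opt_bounded := optimal_basis_ker_dim_bounded hm.
have bounded_opt := ker_dim_bounded_optimal_basis habs hm.
have bounded_min := ker_dim_bounded_radius_support_min habs hm.
have min_bounded := radius_support_min_ker_dim_bounded habs hm.
split; split => [hopt|h].
- exact: radius_support_min_pure habs hm (bounded_min (opt_bounded hopt)).
- exact: bounded_opt (min_bounded (pure_radius_support_min habs h)).
- exact: bounded_min (opt_bounded hopt).
- exact: bounded_opt (min_bounded h).
Qed.
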